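(* $E_{range}<_{\mathrm{Learn}}E_3$: every $E_{range}$-learnable family of structures is $E_3$-learnable, and there is a family that is $E_3$-learnable but not $E_{range}$-learnable.
   Context: All structures are countable, have domain $\mathbb{N}$, are in a finite relational signature, and are identified with their atomic diagrams (elements of $2^{\mathbb{N}}$). A family of structures is a countable set of pairwise nonisomorphic such structures. $\mathrm{LD}(\mathfrak{K})\subseteq 2^{\mathbb{N}}$ is the set of structures with domain $\mathbb{N}$ isomorphic to a member of $\mathfrak{K}$ (subspace topology). For an equivalence relation $E$ on a space $X$, $\mathfrak{K}$ is $E$-learnable if there is a continuous $\Gamma:\mathrm{LD}(\mathfrak{K})\to X$ with $\mathcal{S}\cong\mathcal{S}'\iff\Gamma(\mathcal{S})\,E\,\Gamma(\mathcal{S}')$ for all $\mathcal{S},\mathcal{S}'\in\mathrm{LD}(\mathfrak{K})$. On Baire space: $p\,E_0\,q\iff\exists m\,\forall n\ge m\ p(n)=q(n)$; $p\,E_{range}\,q\iff\{p(m):m\}=\{q(m):m\}$. Fix a computable bijection $\langle\cdot,\cdot\rangle:\mathbb{N}^2\to\mathbb{N}$; for $p\in\mathbb{N}^{\mathbb{N}\times\mathbb{N}}$ the $m$-th column is $p^{[m]}(n)=p(\langle m,n\rangle)$, and $p\,E_3\,q\iff\forall m\ p^{[m]}\,E_0\,q^{[m]}$. $X\leq_{\mathrm{Learn}}Y$ means every $X$-learnable family is $Y$-learnable; $<_{\mathrm{Learn}}$ means $\leq_{\mathrm{Learn}}$ and not the converse. *)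

From Stdlib Require Import Arith List.
Import ListNotations.

(* A finite relational signature: the list of arities of its relation symbols. *)
Definition signature := list nat.

(* An atom R_i(x_1,...,x_k): a relation index and a tuple of elements of N. *)
Definition atom := (nat * list nat)%type.

Definition valid_atom (sig : signature) (a : atom) : Prop :=
  fst a < length sig /\ length (snd a) = nth (fst a) sig 0.

(* A structure with domain N, identified with its atomic diagram: a 0/1 value on
   every (valid) atom.  Values on invalid atoms are normalized to false, so the
   structures for sig are exactly the points of 2^{valid atoms} (≅ 2^N). *)
Definition structure := atom -> bool.

Definition wf_structure (sig : signature) (S : structure) : Prop :=
  forall a, ~ valid_atom sig a -> S a = false.

Definition iso (sig : signature) (S S' : structure) : Prop :=
  exists f g : nat -> nat,
    (forall x, g (f x) = x) /\ (forall x, f (g x) = x) /\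
    (forall a, valid_atom sig a -> S a = S' (fst a, map f (snd a))).

Definition family (sig : signature) (K : structure -> Prop) : Prop :=
  (forall S, K S -> wf_structure sig S) /\
  (exists e : nat -> option structure, forall S, K S <-> exists n, e n = Some S) /\
  (forall S S', K S -> K S' -> iso sig S S' -> S = S').

Definition LD (sig : signature) (K : structure -> Prop) (S : structure) : Prop :=
  wf_structure sig S /\ exists T, K T /\ iso sig S T.

Definition baire := nat -> nat.

Definition continuous_on_LD (sig : signature) (K : structure -> Prop)
    (Gamma : structure -> baire) : Prop :=
  forall S, LD sig K S -> forall n, exists L : list atom,
    forall S', LD sig K S' -> (forall a, In a L -> S' a = S a) ->
      forall k, k < n -> Gamma S' k = Gamma S k.

Definition learnable (E : baire -> baire -> Prop) (sig : signature)
    (K : structure -> Prop) : Prop :=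
  exists Gamma : structure -> baire,
    continuous_on_LD sig K Gamma /\
    forall S S', LD sig K S -> LD sig K S' ->
      (iso sig S S' <-> E (Gamma S) (Gamma S')).

Definition E0 (p q : baire) : Prop :=
  exists m, forall n, m <= n -> p n = q n.

Definition Erange (p q : baire) : Prop :=
  (forall m, exists k, p m = q k) /\ (forall m, exists k, q m = p k).

(* Cantor pairing: a computable bijection N^2 -> N. *)
Definition cpair (m n : nat) : nat := (m + n) * (m + n + 1) / 2 + n.

Definition column (p : baire) (m : nat) : baire := fun n => p (cpair m n).

Definition E3 (p q : baire) : Prop :=
  forall m, E0 (column p m) (column q m).

Definition learn_le (X Y : baire -> baire -> Prop) : Prop :=
  forall sig K, family sig K -> learnable X sig K -> learnable Y sig K.

Definition learn_lt (X Y : baire -> baire -> Prop) : Prop :=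
  learn_le X Y /\ ~ learn_le Y X.

(* E_range reduces continuously to E_3: send p to the array whose m-th column
   is the indicator sequence of "m occurs among p 0, ..., p n"; this column is
   eventually 1 if m is in the range of p and constantly 0 otherwise.

   For the separation take the two graphs made of the edges {2i+1, 2i+2}, the
   odd endpoint carrying a loop, plus an isolated vertex 0 that is looped in
   one graph and not in the other.  Reading the loop bit of the first vertex
   that looks isolated so far gives a learner converging to the isomorphism
   type, hence an E_3-learner.  But every finite piece of either graph is a
   piece of a copy of the other one (swap 0 with a vertex c beyond the piece
   whose loop bit is the wanted one; inside the piece c looks isolated), so the outputs of a continuous
   E_range-learner on one graph all occur on the other; the two graphs would
   get E_range-equivalent codes. *)
From Stdlib Require Import Arith Lia List Classical Cantor.
Import ListNotations.

Lemma cpair_to_nat m n : cpair m n = Cantor.to_nat (m, n).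
Proof.
  rewrite Cantor.to_nat_spec2; unfold cpair.
  replace ((n + m) * S (n + m)) with ((m + n) * (m + n + 1)) by ring. lia.
Qed.

Lemma le_cpair_r m n : n <= cpair m n.
Proof. rewrite cpair_to_nat. pose proof (Cantor.to_nat_non_decreasing m n). lia. Qed.

Lemma le_of_nat_snd k : snd (Cantor.of_nat k) <= k.
Proof.
  pose proof (Cantor.cancel_to_of k) as Hk.
  destruct (Cantor.of_nat k) as [m n]; simpl.
  pose proof (Cantor.to_nat_non_decreasing m n). lia.
Qed.

Lemma in_list_max x l : In x l -> x <= list_max l.
Proof.
  intros Hx. pose proof (proj1 (list_max_le l (list_max l)) (le_n _)) as Hl.
  rewrite Forall_forall in Hl. auto.
Qed.

Lemma forallb_ext_in {A} (f g : A -> bool) l :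
  (forall x, In x l -> f x = g x) -> forallb f l = forallb g l.
Proof. induction l as [|a l IH]; simpl; intros H; auto. rewrite H, IH; auto. Qed.

Lemma find_ext_in {A} (f g : A -> bool) l :
  (forall x, In x l -> f x = g x) -> find f l = find g l.
Proof. induction l as [|a l IH]; simpl; intros H; auto. rewrite H, IH; auto. Qed.

Lemma find_seq_first (p : nat -> bool) a n u :
  a <= u < a + n -> p u = true -> (forall x, a <= x < u -> p x = false) ->
  find p (seq a n) = Some u.
Proof.
  revert a; induction n as [|n IH]; intros a Hu Hp Hlt; [lia|]; simpl.
  destruct (Nat.eq_dec a u) as [<-|Hne]; [now rewrite Hp|].
  rewrite (Hlt a) by lia. apply IH; auto; [lia|]. intros; apply Hlt; lia.
Qed.

Definition eventually_eq (p : baire) (c : nat) : Prop :=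
  exists N, forall n, N <= n -> p n = c.

Lemma E0_eventually_eq_iff p q c d :
  eventually_eq p c -> eventually_eq q d -> (E0 p q <-> c = d).
Proof.
  intros [N1 H1] [N2 H2]; split.
  - intros [M HM]. specialize (HM (M + N1 + N2) ltac:(lia)).
    rewrite H1, H2 in HM by lia. exact HM.
  - intros <-. exists (N1 + N2). intros n Hn. rewrite H1, H2 by lia. reflexivity.
Qed.

Lemma eventually_eq_column p c m : eventually_eq p c -> eventually_eq (column p m) c.
Proof.
  intros [N HN]. exists N. intros n Hn. apply HN.
  pose proof (le_cpair_r m n). lia.
Qed.

Lemma E3_eventually_eq_iff p q c d :
  eventually_eq p c -> eventually_eq q d -> (E3 p q <-> c = d).
Proof.
  intros Hp Hq. pose proof (fun m => E0_eventually_eq_iff _ _ _ _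
    (eventually_eq_column p c m Hp) (eventually_eq_column q d m Hq)) as Hcol.
  split.
  - intros H. apply (Hcol 0), H.
  - intros Hcd m. apply Hcol, Hcd.
Qed.

(** * Continuous reductions between equivalence relations *)

Definition prefix_determined (F : baire -> baire) : Prop :=
  forall p q k, (forall j, j <= k -> p j = q j) -> F p k = F q k.

Lemma learn_le_of_reduction (E E' : baire -> baire -> Prop) (F : baire -> baire) :
  prefix_determined F -> (forall p q, E p q <-> E' (F p) (F q)) -> learn_le E E'.
Proof.
  intros HF HE sig K _ [G [HGc HG]]. exists (fun S => F (G S)). split.
  - intros S HS n. destruct (HGc S HS n) as [L HL]. exists L.
    intros S' HS' Hagree k Hk. apply HF. intros j Hj. apply HL; auto; lia.
  - intros S S' HS HS'. rewrite HG by assumption. apply HE.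
Qed.

Definition occursb (p : baire) (m n : nat) : bool :=
  existsb (fun j => p j =? m) (seq 0 (S n)).

Lemma occursbP p m n : occursb p m n = true <-> exists j, j <= n /\ p j = m.
Proof.
  unfold occursb. rewrite existsb_exists. split.
  - intros [j [Hj Hpj]]. apply in_seq in Hj. apply Nat.eqb_eq in Hpj. exists j. split; [lia|auto].
  - intros [j [Hj Hpj]]. exists j. split; [apply in_seq; lia|apply Nat.eqb_eq; auto].
Qed.

Lemma occursb_ext p q m n :
  (forall j, j <= n -> p j = q j) -> occursb p m n = occursb q m n.
Proof.
  intros Hpq. apply Bool.eq_true_iff_eq. rewrite !occursbP.
  split; intros [j [Hj Hm]]; exists j; split; auto.
  - now rewrite <- Hpq.
  - now rewrite Hpq.
Qed.

Definition range_code (p : baire) : baire := fun k =>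
  let (m, n) := Cantor.of_nat k in Nat.b2n (occursb p m n).

Lemma column_range_code p m n : column (range_code p) m n = Nat.b2n (occursb p m n).
Proof. unfold column, range_code. now rewrite cpair_to_nat, Cantor.cancel_of_to. Qed.

Lemma range_code_prefix_determined : prefix_determined range_code.
Proof.
  intros p q k Hpq. unfold range_code. pose proof (le_of_nat_snd k) as Hk.
  destruct (Cantor.of_nat k) as [m n]; simpl in Hk.
  rewrite (occursb_ext p q) by (intros; apply Hpq; lia). reflexivity.
Qed.

Lemma range_code_occurs p m j : p j = m -> eventually_eq (column (range_code p) m) 1.
Proof.
  intros Hj. exists j. intros n Hn. rewrite column_range_code.
  replace (occursb p m n) with true; [reflexivity|].
  symmetry. apply occursbP. eauto.
Qed.

Lemma range_code_not_occurs p m :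
  ~ (exists j, p j = m) -> eventually_eq (column (range_code p) m) 0.
Proof.
  intros Hm. exists 0. intros n _. rewrite column_range_code.
  destruct (occursb p m n) eqn:E; [|reflexivity].
  exfalso. apply occursbP in E. destruct E as [j [_ Hj]]. eauto.
Qed.

Lemma range_incl_of_E3_range_code p q :
  E3 (range_code p) (range_code q) -> forall m, exists k, p m = q k.
Proof.
  intros H m. destruct (classic (exists k, q k = p m)) as [[k Hk]|Hnot]; [eauto|].
  exfalso. specialize (H (p m)).
  rewrite (E0_eventually_eq_iff _ _ _ _ (range_code_occurs p (p m) m eq_refl)
    (range_code_not_occurs q (p m) Hnot)) in H.
  discriminate.
Qed.

Lemma E3_sym p q : E3 p q -> E3 q p.
Proof. intros H m. destruct (H m) as [N HN]. exists N. intros n Hn. symmetry. auto. Qed.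

Lemma Erange_iff_E3_range_code p q : Erange p q <-> E3 (range_code p) (range_code q).
Proof.
  split.
  - intros [Hpq Hqp] m. destruct (classic (exists j, p j = m)) as [[j Hj]|Hnot].
    + destruct (Hpq j) as [k Hk].
      apply (E0_eventually_eq_iff _ _ 1 1); [| |reflexivity].
      * exact (range_code_occurs p m j Hj).
      * apply (range_code_occurs q m k). congruence.
    + apply (E0_eventually_eq_iff _ _ 0 0); [now apply range_code_not_occurs| |reflexivity].
      apply range_code_not_occurs. intros [k Hk]. destruct (Hqp k) as [j Hj].
      apply Hnot. exists j. congruence.
  - intros H. split; apply range_incl_of_E3_range_code; auto using E3_sym.
Qed.

Lemma learn_le_Erange_E3 : learn_le Erange E3.
Proof.
  apply (learn_le_of_reduction _ _ range_code).
  - exact range_code_prefix_determined.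
  - exact Erange_iff_E3_range_code.
Qed.

Lemma valid_atom_map sig i l (h : nat -> nat) :
  valid_atom sig (i, map h l) <-> valid_atom sig (i, l).
Proof. unfold valid_atom; simpl. now rewrite length_map. Qed.

Lemma iso_refl sig S : iso sig S S.
Proof.
  exists (fun x => x), (fun x => x). repeat split; auto.
  intros [i l] _. simpl. now rewrite map_id.
Qed.

Lemma iso_sym sig S T : iso sig S T -> iso sig T S.
Proof.
  intros [f [g [Hgf [Hfg H]]]]. exists g, f. repeat split; auto.
  intros [i l] Hv. simpl.
  rewrite (H (i, map g l)) by (apply valid_atom_map; auto). simpl.
  rewrite map_map, (map_ext _ (fun x => x)), map_id by auto. reflexivity.
Qed.

Lemma iso_trans sig S T U : iso sig S T -> iso sig T U -> iso sig S U.
Proof.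
  intros [f1 [g1 [Hgf1 [Hfg1 H1]]]] [f2 [g2 [Hgf2 [Hfg2 H2]]]].
  exists (fun x => f2 (f1 x)), (fun x => g1 (g2 x)). repeat split.
  - intros x. now rewrite Hgf2.
  - intros x. now rewrite Hfg1.
  - intros [i l] Hv. rewrite H1 by auto. simpl.
    rewrite H2 by (apply valid_atom_map; auto). simpl. now rewrite map_map.
Qed.

Definition relabel (h : nat -> nat) (S : structure) : structure :=
  fun a => S (fst a, map h (snd a)).

Lemma wf_relabel sig h S : wf_structure sig S -> wf_structure sig (relabel h S).
Proof.
  intros HS [i l] Hv. apply (HS (i, map h l)). now rewrite valid_atom_map.
Qed.

Lemma iso_relabel sig h S : (forall x, h (h x) = x) -> iso sig (relabel h S) S.
Proof. intros Hh. exists h, h. repeat split; auto. Qed.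

(** * The two paired graphs *)

Definition graph_sig : signature := [2].

Definition mate (x : nat) : nat := if Nat.odd x then S x else pred x.

Definition adj (b : bool) (x y : nat) : bool :=
  if x =? y then (if x =? 0 then b else Nat.odd x)
  else negb (x =? 0) && (y =? mate x).

Definition paired_graph (b : bool) : structure := fun a =>
  match a with (0, [x; y]) => adj b x y | _ => false end.

Definition paired_graphs (S : structure) : Prop :=
  S = paired_graph true \/ S = paired_graph false.

Lemma valid_edge x y : valid_atom graph_sig (0, [x; y]).
Proof. unfold valid_atom; simpl; auto. Qed.

Lemma iso_paired_graph_adj S b f :
  (forall a, valid_atom graph_sig a -> S a = paired_graph b (fst a, map f (snd a))) ->
  forall x y, S (0, [x; y]) = adj b (f x) (f y).
Proof. intros H x y. exact (H _ (valid_edge x y)). Qed.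

Lemma mate_neq x : x <> 0 -> mate x <> x.
Proof. unfold mate; destruct (Nat.odd x); lia. Qed.

Lemma mate_bounds x : pred x <= mate x <= S x.
Proof. unfold mate; destruct (Nat.odd x); lia. Qed.

Lemma mate_neq0 x : x <> 0 -> mate x <> 0.
Proof.
  unfold mate; destruct (Nat.odd x) eqn:E; [lia|].
  destruct (Nat.eq_dec x 1) as [->|]; [discriminate|lia].
Qed.

Lemma adj_mate b x : x <> 0 -> adj b x (mate x) = true.
Proof.
  intros Hx. unfold adj. pose proof (mate_neq x Hx).
  rewrite (proj2 (Nat.eqb_neq x (mate x))), (proj2 (Nat.eqb_neq x 0)) by auto.
  now rewrite Nat.eqb_refl.
Qed.

Lemma adj_0_l b y : y <> 0 -> adj b 0 y = false.
Proof. intros Hy. unfold adj. now rewrite (proj2 (Nat.eqb_neq 0 y)) by auto. Qed.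

Lemma adj_indep b t x y : x <> 0 -> adj b x y = adj t x y.
Proof. intros Hx. unfold adj. now rewrite (proj2 (Nat.eqb_neq x 0)). Qed.

Lemma wf_paired_graph b : wf_structure graph_sig (paired_graph b).
Proof.
  intros [[|i] l] Hv; [|reflexivity].
  destruct l as [|x [|y [|z l]]]; try reflexivity. exfalso. apply Hv, valid_edge.
Qed.

(* An isomorphism fixes 0, the only vertex without a neighbour other than itself. *)
Lemma iso_paired_graph_inj b1 b2 :
  iso graph_sig (paired_graph b1) (paired_graph b2) -> b1 = b2.
Proof.
  intros [f [g [Hgf [Hfg H]]]].
  pose proof (iso_paired_graph_adj _ _ _ H) as Hadj; cbn [paired_graph] in Hadj.
  destruct (Nat.eq_dec (f 0) 0) as [E|E].
  - specialize (Hadj 0 0). rewrite E in Hadj. exact Hadj.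
  - exfalso. specialize (Hadj 0 (g (mate (f 0)))).
    rewrite Hfg, adj_mate in Hadj by auto.
    destruct (Nat.eq_dec (g (mate (f 0))) 0) as [E2|E2].
    + apply (mate_neq (f 0) E). now rewrite <- (Hfg (mate (f 0))), E2.
    + now rewrite adj_0_l in Hadj.
Qed.

Lemma family_paired_graphs : family graph_sig paired_graphs.
Proof.
  split; [|split].
  - intros S [->| ->]; apply wf_paired_graph.
  - exists (fun n => Some (paired_graph (n =? 0))). intros S. split.
    + intros [->| ->]; [exists 0|exists 1]; reflexivity.
    + intros [n Hn]. injection Hn as <-. destruct (n =? 0); [left|right]; reflexivity.
  - intros S S' [->| ->] [->| ->] Hiso; auto;
      apply iso_paired_graph_inj in Hiso; discriminate.
Qed.

Lemma LD_paired_graph b : LD graph_sig paired_graphs (paired_graph b).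
Proof.
  split; [apply wf_paired_graph|]. exists (paired_graph b).
  split; [destruct b; [left|right]; auto|apply iso_refl].
Qed.

Lemma LD_paired_graphs_inv S :
  LD graph_sig paired_graphs S -> exists b, iso graph_sig S (paired_graph b).
Proof. intros [_ [T [[->| ->] Hiso]]]; eauto. Qed.

Lemma LD_paired_graphs_iso S S' b b' :
  iso graph_sig S (paired_graph b) -> iso graph_sig S' (paired_graph b') ->
  (iso graph_sig S S' <-> b = b').
Proof.
  intros HS HS'. split.
  - intros Hiso. apply iso_paired_graph_inj.
    apply (iso_trans _ _ S); [now apply iso_sym|]. now apply (iso_trans _ _ S').
  - intros <-. apply (iso_trans _ _ (paired_graph b)); auto. now apply iso_sym.
Qed.

(** * An E_3-learner *)

Definition isolated_upto (St : structure) (s x : nat) : bool :=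
  forallb (fun y => orb (y =? x) (negb (St (0, [x; y])))) (seq 0 (S s)).

Definition loop_learner (St : structure) : baire := fun s =>
  match find (isolated_upto St s) (seq 0 (S s)) with
  | Some x => Nat.b2n (St (0, [x; x]))
  | None => 0
  end.

Lemma loop_learner_ext St St' s :
  (forall x y, x <= s -> y <= s -> St (0, [x; y]) = St' (0, [x; y])) ->
  loop_learner St s = loop_learner St' s.
Proof.
  intros H. unfold loop_learner.
  rewrite (find_ext_in (isolated_upto St s) (isolated_upto St' s)).
  - destruct (find (isolated_upto St' s) (seq 0 (S s))) as [x|] eqn:F; auto.
    apply find_some in F as [F _]. apply in_seq in F. rewrite H by lia. reflexivity.
  - intros x Hx. apply in_seq in Hx. apply forallb_ext_in.
    intros y Hy. apply in_seq in Hy. rewrite H by lia. reflexivity.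
Qed.

Section LoopLearnerConverges.

Variables (St : structure) (b : bool) (f g : nat -> nat).
Hypothesis gf : forall x, g (f x) = x.
Hypothesis fg : forall x, f (g x) = x.
Hypothesis St_adj : forall x y, St (0, [x; y]) = adj b (f x) (f y).

Lemma f_neq0 x : x <> g 0 -> f x <> 0.
Proof. intros Hx E. apply Hx. now rewrite <- E, gf. Qed.

Lemma isolated_upto_center s : isolated_upto St s (g 0) = true.
Proof.
  apply forallb_forall. intros y _.
  destruct (Nat.eq_dec y (g 0)) as [->|Hne]; [now rewrite Nat.eqb_refl|].
  rewrite St_adj, fg, adj_0_l by (apply f_neq0; auto). apply Bool.orb_true_r.
Qed.

Lemma isolated_upto_false x s :
  x <> g 0 -> g (mate (f x)) <= s -> isolated_upto St s x = false.
Proof.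
  intros Hx Hs. pose proof (f_neq0 x Hx) as Hfx.
  destruct (isolated_upto St s x) eqn:E; auto. unfold isolated_upto in E.
  rewrite forallb_forall in E. specialize (E (g (mate (f x))) ltac:(apply in_seq; lia)).
  rewrite St_adj, fg, adj_mate in E by auto.
  assert (g (mate (f x)) <> x) as Hne.
  { intros E2. apply (mate_neq (f x) Hfx). now rewrite <- E2 at 2. }
  now rewrite (proj2 (Nat.eqb_neq _ _)) in E.
Qed.

Lemma loop_learner_eventually : eventually_eq (loop_learner St) (Nat.b2n b).
Proof.
  set (M := list_max (map (fun x => g (mate (f x))) (seq 0 (g 0)))).
  exists (M + g 0). intros s Hs. unfold loop_learner.
  rewrite (find_seq_first _ 0 (S s) (g 0)); [| lia | apply isolated_upto_center |].
  - now rewrite St_adj, fg.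
  - intros x Hx. apply isolated_upto_false; [lia|].
    enough (g (mate (f x)) <= M) by lia.
    apply in_list_max, (in_map (fun x => g (mate (f x)))), in_seq. lia.
Qed.

End LoopLearnerConverges.

Definition square_atoms (n : nat) : list atom :=
  flat_map (fun x => map (fun y => (0, [x; y])) (seq 0 n)) (seq 0 n).

Lemma in_square_atoms n x y : x < n -> y < n -> In (0, [x; y]) (square_atoms n).
Proof.
  intros Hx Hy. apply in_flat_map. exists x. split; [apply in_seq; lia|].
  apply in_map_iff. exists y. split; [reflexivity|apply in_seq; lia].
Qed.

Lemma learnable_E3_paired_graphs : learnable E3 graph_sig paired_graphs.
Proof.
  exists loop_learner. split.
  - intros S HS n. exists (square_atoms n). intros S' HS' Hagree k Hk.
    apply loop_learner_ext. intros x y Hx Hy. apply Hagree, in_square_atoms; lia.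
  - intros S S' HS HS'.
    destruct (LD_paired_graphs_inv S HS) as [b Hb].
    destruct (LD_paired_graphs_inv S' HS') as [b' Hb'].
    rewrite (LD_paired_graphs_iso S S' b b' Hb Hb').
    destruct Hb as [f [g [Hgf [Hfg H]]]], Hb' as [f' [g' [Hgf' [Hfg' H']]]].
    rewrite (E3_eventually_eq_iff _ _ _ _
      (loop_learner_eventually S b f g Hgf Hfg (iso_paired_graph_adj _ _ _ H))
      (loop_learner_eventually S' b' f' g' Hgf' Hfg' (iso_paired_graph_adj _ _ _ H'))).
    split; [intros ->; reflexivity|apply Nat.b2n_inj].
Qed.

(** * No E_range-learner *)

Lemma Erange_learner_range_incl sig K Gamma S T :
  continuous_on_LD sig K Gamma ->
  (forall S S', LD sig K S -> LD sig K S' -> iso sig S S' -> Erange (Gamma S) (Gamma S')) ->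
  LD sig K S -> LD sig K T ->
  (forall L : list atom, exists S', LD sig K S' /\ iso sig S' T /\
     forall a, In a L -> S' a = S a) ->
  forall m, exists k, Gamma S m = Gamma T k.
Proof.
  intros Hc HG HS HT Hdense m.
  destruct (Hc S HS (m + 1)) as [L HL].
  destruct (Hdense L) as [S' [HS' [Hiso Hagree]]].
  destruct (proj1 (HG S' T HS' HT Hiso) m) as [k Hk].
  exists k. rewrite <- (HL S' HS' Hagree m) by lia. exact Hk.
Qed.

Definition swap0 (c x : nat) : nat := if x =? 0 then c else if x =? c then 0 else x.

Lemma swap0_involutive c x : swap0 c (swap0 c x) = x.
Proof.
  unfold swap0. destruct (Nat.eqb_spec x 0) as [->|Hx0].
  - destruct (Nat.eqb_spec c 0); [auto|now rewrite Nat.eqb_refl].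
  - destruct (Nat.eqb_spec x c) as [->|Hxc]; [reflexivity|].
    now rewrite (proj2 (Nat.eqb_neq x 0) Hx0), (proj2 (Nat.eqb_neq x c) Hxc).
Qed.

(* Below [N], swapping 0 with a far vertex [c] turns vertex 0 into a copy of
   [c]: loop bit [Nat.odd c], and its mate out of sight. *)
Lemma adj_swap0 b c N x y : N + 2 <= c -> x <= N -> y <= N ->
  adj b (swap0 c x) (swap0 c y) = adj (Nat.odd c) x y.
Proof.
  intros Hc Hx Hy. pose proof (mate_bounds c). unfold swap0.
  rewrite (proj2 (Nat.eqb_neq x c)), (proj2 (Nat.eqb_neq y c)) by lia.
  destruct (Nat.eqb_spec x 0) as [->|Hx0]; destruct (Nat.eqb_spec y 0) as [->|Hy0].
  - unfold adj. now rewrite Nat.eqb_refl, (proj2 (Nat.eqb_neq c 0)) by lia.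
  - rewrite adj_0_l by auto. unfold adj.
    rewrite (proj2 (Nat.eqb_neq c y)), (proj2 (Nat.eqb_neq y (mate c))) by lia.
    apply Bool.andb_false_r.
  - pose proof (mate_bounds x). pose proof (mate_neq0 x Hx0). unfold adj.
    rewrite (proj2 (Nat.eqb_neq x c)), (proj2 (Nat.eqb_neq x 0)),
      (proj2 (Nat.eqb_neq c (mate x))), (proj2 (Nat.eqb_neq 0 (mate x))) by lia.
    reflexivity.
  - apply adj_indep; auto.
Qed.

Lemma paired_graph_copies_dense b (L : list atom) :
  exists S', LD graph_sig paired_graphs S' /\
    iso graph_sig S' (paired_graph (negb b)) /\
    forall a, In a L -> S' a = paired_graph b a.
Proof.
  set (N := list_max (flat_map snd L)).
  set (c := 2 * (N + 2) + Nat.b2n b).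
  assert (Hodd : Nat.odd c = b) by (unfold c; now rewrite <- Nat.bit0_odd, Nat.testbit_0_r).
  pose proof (iso_relabel graph_sig (swap0 c) (paired_graph (negb b))
    (swap0_involutive c)) as Hiso.
  exists (relabel (swap0 c) (paired_graph (negb b))). split; [|split; [exact Hiso|]].
  - split; [apply wf_relabel, wf_paired_graph|].
    exists (paired_graph (negb b)). split; [destruct b; [right|left]; auto|exact Hiso].
  - intros [[|i] l] Ha; [|reflexivity].
    destruct l as [|x [|y [|z l]]]; try reflexivity. simpl.
    assert (Hxy : x <= N /\ y <= N).
    { split; apply in_list_max, in_flat_map; exists (0, [x; y]); simpl; auto. }
    rewrite <- Hodd at 2. apply (adj_swap0 _ _ N); unfold c; lia.
Qed.

Lemma not_learnable_Erange_paired_graphs : ~ learnable Erange graph_sig paired_graphs.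
Proof.
  intros [G [HGc HG]].
  assert (Hincl : forall b m, exists k,
    G (paired_graph b) m = G (paired_graph (negb b)) k).
  { intros b. apply (Erange_learner_range_incl graph_sig paired_graphs); auto.
    - intros S S' HS HS'. apply HG; auto.
    - apply LD_paired_graph.
    - apply LD_paired_graph.
    - apply paired_graph_copies_dense. }
  assert (Hiso : iso graph_sig (paired_graph true) (paired_graph false)).
  { apply HG; [apply LD_paired_graph..|]. split; [apply (Hincl true)|apply (Hincl false)]. }
  apply iso_paired_graph_inj in Hiso. discriminate.
Qed.

Theorem mainTheorem9 :
  learn_le Erange E3 /\
  exists (sig : signature) (K : structure -> Prop),
    family sig K /\ learnable E3 sig K /\ ~ learnable Erange sig K.
Proof.
  split; [exact learn_le_Erange_E3|].
  exists graph_sig, paired_graphs. split; [|split].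
  - exact family_paired_graphs.
  - exact learnable_E3_paired_graphs.
  - exact not_learnable_Erange_paired_graphs.
Qed.
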